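(* Let $G$ be the 2-blowup of $F_3$. Then $\chi(G)=7$.
   Context: $F_3$ is the graph on $\{v_1,\dots,v_6,x,y,z\}$ where $v_1\cdots v_6v_1$ is an induced 6-cycle, $x$ is adjacent to $v_1,v_2,v_3$, $y$ to $v_3,v_4,v_5$, $z$ to $v_5,v_6,v_1$, $\{x,y,z\}$ is a triangle, and there are no other edges. The 2-blowup of $H$ is obtained by replacing each vertex $v$ of $H$ by a clique $Q_v$ of size 2, with $Q_u$ complete to $Q_v$ if $uv\in E(H)$ and no edges between $Q_u,Q_v$ otherwise. *)

From mathcomp Require Import all_boot.
Set Implicit Arguments. Unset Strict Implicit. Unset Printing Implicit Defensive.

(* Simple graphs are symmetric irreflexive boolean relations on a finType. *)

Definition proper_coloring (T : finType) (e : rel T) (k : nat) (f : T -> 'I_k) : bool :=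
  [forall u, forall v, e u v ==> (f u != f v)].

Definition colorable (T : finType) (e : rel T) (k : nat) : bool :=
  [exists f : {ffun T -> 'I_k}, proper_coloring e f].

(* Chromatic number: the least k (in 0..#|T|) such that e is k-colourable.
   For a loopless graph, k = #|T| always works, so this is the true minimum. *)
Definition chromatic_number (T : finType) (e : rel T) : nat :=
  find (colorable e) (iota 0 #|T|.+1).

(* The graph F_3 on 'I_9: v1..v6 = 0..5, x = 6, y = 7, z = 8. *)
Definition F3_edges : seq (nat * nat) :=
  [:: (0,1); (1,2); (2,3); (3,4); (4,5); (5,0);
      (6,0); (6,1); (6,2);
      (7,2); (7,3); (7,4);
      (8,4); (8,5); (8,0);
      (6,7); (7,8); (6,8)].

Definition F3 : rel 'I_9 := fun u v =>
  ((nat_of_ord u, nat_of_ord v) \in F3_edges) ||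
  ((nat_of_ord v, nat_of_ord u) \in F3_edges).

(* 2-blowup: each vertex v replaced by the clique Q_v = {(v,0),(v,1)};
   Q_u complete to Q_v iff uv is an edge, no edges otherwise. *)
Definition blowup2 (T : finType) (e : rel T) : rel (T * 'I_2) := fun p q =>
  ((p.1 == q.1) && (p.2 != q.2)) || e p.1 q.1.

From mathcomp Require Import all_boot zmodp zify.
Set Implicit Arguments. Unset Strict Implicit. Unset Printing Implicit Defensive.

(* Weight the vertices of F_3 by 4 on v1, v3, v5, by 3 on v2, v4, v6 and by 6
   on x, y, z.  Every stable set of F_3 weighs at most 12.  A colour class of
   the 2-blowup meets each clique Q_v at most once and projects onto a stable
   set of F_3, so it also weighs at most 12 (weighting (v, i) like v); as the
   blowup weighs 2 * 39 = 78 > 6 * 12, six colours do not suffice.  An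
   explicit 7-colouring gives the upper bound. *)

Definition stable (T : finType) (e : rel T) (A : {set T}) : Prop :=
  {in A &, forall x y, ~~ e x y}.

Section Colorings.

Variables (T : finType) (e : rel T).

Lemma chromatic_numberE n :
  n <= #|T| -> colorable e n -> (forall k, k < n -> ~~ colorable e k) ->
  chromatic_number e = n.
Proof.
move=> le_nT col_n ncol.
rewrite /chromatic_number -(subnKC (leqW le_nT)) iotaD find_cat size_iota.
have -> : has (colorable e) (iota 0 n) = false.
  by apply/hasPn => k; rewrite mem_iota => /andP[_]; apply: ncol.
by rewrite subSn //= col_n addn0.
Qed.

Lemma proper_coloring_colorable k (f : T -> 'I_k) :
  proper_coloring e f -> colorable e k.
Proof.
move=> /forallP f_proper; apply/existsP; exists [ffun x => f x].
by apply/forallP => x; apply/forallP => y; rewrite !ffunE; apply/forallP: y.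
Qed.

Lemma proper_coloring_seq k (f : T -> 'I_k) (s : seq T) :
  (forall x, x \in s) -> all (fun x => all (fun y => e x y ==> (f x != f y)) s) s ->
  proper_coloring e f.
Proof.
move=> s_full /allP ok; apply/forallP => x; apply/forallP => y.
exact: allP (ok x (s_full x)) y (s_full y).
Qed.

Variables (w : T -> nat) (m : nat).
Hypothesis stable_weight : forall A : {set T}, stable e A -> \sum_(x in A) w x <= m.

Lemma colorable_weight k : colorable e k -> \sum_x w x <= k * m.
Proof.
case/existsP => f /forallP f_proper.
rewrite (partition_big f xpredT) //= -[k in k * m]card_ord -sum_nat_const.
apply: leq_sum => c _.
have class_stable : stable e [set x | f x == c].
  move=> x y; rewrite !inE => /eqP fx /eqP fy.
  by have /forallP/(_ y) := f_proper x; rewrite fx fy eqxx implybF.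
have := stable_weight class_stable.
by rewrite (eq_bigl (fun x => f x == c)) // => x; rewrite inE.
Qed.

End Colorings.

Section Blowup2.

Variables (T : finType) (e : rel T).

Lemma stable_blowup2_fst_inj (B : {set T * 'I_2}) :
  stable (blowup2 e) B -> {in B &, injective fst}.
Proof.
move=> stabB [a x] [b y] aB bB /= eq_ab; subst b.
have [->//|neq_xy] := eqVneq x y.
by have := stabB _ _ aB bB; rewrite /blowup2 /= eqxx neq_xy.
Qed.

Lemma stable_blowup2_fst (B : {set T * 'I_2}) :
  stable (blowup2 e) B -> stable e (fst @: B).
Proof.
move=> stabB _ _ /imsetP[p pB ->] /imsetP[q qB ->].
by have := stabB _ _ pB qB; rewrite /blowup2 negb_or => /andP[].
Qed.

Lemma blowup2_stable_weight (w : T -> nat) m :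
  (forall A : {set T}, stable e A -> \sum_(x in A) w x <= m) ->
  forall B : {set T * 'I_2}, stable (blowup2 e) B -> \sum_(p in B) w p.1 <= m.
Proof.
move=> stable_weight B stabB.
rewrite -(big_imset w (stable_blowup2_fst_inj stabB)).
exact/stable_weight/stable_blowup2_fst.
Qed.

End Blowup2.

Definition F3_weight (i : nat) : nat := if i < 6 then (if odd i then 3 else 4) else 6.

Lemma F3_stable_weight (A : {set 'I_9}) : stable F3 A -> \sum_(i in A) F3_weight i <= 12.
Proof.
move=> stabA.
have edges_free : all (fun uv => ~~ ((inord uv.1 \in A) && (inord uv.2 \in A))) F3_edges.
  have edges_bounded : all (fun uv => (uv.1 < 9) && (uv.2 < 9)) F3_edges by [].
  apply/allP => -[u v] /= uv_edge; apply/negP => /andP[uA vA].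
  have /andP[u9 v9] := allP edges_bounded _ uv_edge.
  by have := stabA _ _ uA vA; rewrite /F3 !inordK // uv_edge.
have -> : \sum_(i in A) F3_weight i = \sum_(0 <= k < 9) (inord k \in A) * F3_weight k.
  rewrite big_mkcond big_mkord; apply: eq_bigr => i _.
  by rewrite inord_val; case: (i \in A); rewrite ?mul1n.
rewrite /index_iota /= !big_cons big_nil.
move: edges_free => /=.
by do 9!case: (inord _ \in A).
Qed.

Lemma F3_blowup2_total_weight : \sum_(p : 'I_9 * 'I_2) F3_weight p.1 = 78.
Proof.
rewrite -(pair_big xpredT xpredT (fun (i : 'I_9) (_ : 'I_2) => F3_weight i)).
by rewrite !big_ord_recl !big_ord0.
Qed.

(* Row j lists the colours of the copies (v1, j), ..., (v6, j), (x, j), (y, j), (z, j). *)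
Definition F3_blowup2_coloring (p : 'I_9 * 'I_2) : 'I_7 :=
  inZp (nth 0 (nth [::] [:: [:: 4; 1; 5; 0; 3; 0; 0; 1; 2];
                             [:: 6; 2; 6; 2; 6; 1; 3; 4; 5]] p.2) p.1).

Lemma F3_blowup2_coloring_proper : proper_coloring (blowup2 F3) F3_blowup2_coloring.
Proof.
pose vertices := [seq (inZp i, inZp j) : 'I_9 * 'I_2 | i <- iota 0 9, j <- iota 0 2].
apply: (@proper_coloring_seq _ _ _ _ vertices).
  move=> [i j]; apply/allpairsPdep; exists (nat_of_ord i), (nat_of_ord j).
  by rewrite !mem_iota !valZpK !ltn_ord.
by vm_compute.
Qed.

Theorem lemma5p5 : chromatic_number (blowup2 F3) = 7.
Proof.
apply: chromatic_numberE; first by rewrite card_prod !card_ord.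
  exact: proper_coloring_colorable F3_blowup2_coloring_proper.
move=> k lt_k7; apply/negP.
move/(colorable_weight (blowup2_stable_weight F3_stable_weight)).
rewrite F3_blowup2_total_weight; lia.
Qed.
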